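(* Let $\mathcal X=\mathcal X_1\times\cdots\times\mathcal X_b$, $\mathcal X_i=\mathbb R^{m_i\times n_i}$ with trace inner product and norms $\|\cdot\|_{(i)}$ (dual $\|\cdot\|_{(i)\star}$), $f$ continuously differentiable, $\mathcal D$ a distribution on subsets of $[b]$, and assume constants $L^0_{i,S},L^1_{i,S}\ge0$ exist such that for all $S\in\operatorname{supp}(\mathcal D)$, $i\in S$, $X\in\mathcal X$ and $\Gamma$ with $\Gamma_j=0$ for $j\notin S$: $\|\nabla_if(X+\Gamma)-\nabla_if(X)\|_{(i)\star}\le(L^0_{i,S}+L^1_{i,S}\|\nabla_if(X)\|_{(i)\star})\|\Gamma_i\|_{(i)}$. Let $S\in\operatorname{supp}(\mathcal D)$. Then for all $X\in\mathcal X$ and $\Gamma$ with $\Gamma_i=0$ for $i\notin S$, $$\big|f(X+\Gamma)-f(X)-\langle\nabla f(X),\Gamma\rangle\big|\le\sum_{i\in S}\frac{L^0_{i,S}+L^1_{i,S}\|\nabla_if(X)\|_{(i)\star}}2\|\Gamma_i\|_{(i)}^2.$$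
   Context: $\operatorname{supp}(\mathcal D)$ is the set of subsets of $[b]$ with positive probability under $\mathcal D$. *)

From HB Require Import structures.
From mathcomp Require Import all_boot all_order all_algebra.
From mathcomp Require Import boolp classical_sets reals.
Set Implicit Arguments. Unset Strict Implicit. Unset Printing Implicit Defensive.
Import Order.TTheory GRing.Theory Num.Theory.
Local Open Scope ring_scope.
Local Open Scope classical_set_scope.

Section Blocks.
Variables (R : realType) (b : nat) (m n : 'I_b -> nat).

Definition blocks := forall i : 'I_b, 'M[R]_(m i, n i).

Definition badd (X Y : blocks) : blocks := fun i => X i + Y i.
Definition bsub (X Y : blocks) : blocks := fun i => X i - Y i.

Definition mip (p q : nat) (A B : 'M[R]_(p, q)) : R := \tr (A^T *m B).
Definition bip (X Y : blocks) : R := \sum_(i < b) mip (X i) (Y i).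

(* A fixed reference norm on X (entrywise l1), used only to define
   differentiability and continuity (all norms are equivalent in finite dim). *)
Definition bnorm (X : blocks) : R :=
  \sum_(i < b) \sum_(k < m i) \sum_(l < n i) `|X i k l|.

Definition is_gradient (f : blocks -> R) (g : blocks -> blocks) : Prop :=
  forall X (eps : R), 0 < eps -> exists2 delta : R, 0 < delta &
    forall H, bnorm H < delta ->
      `|f (badd X H) - f X - bip (g X) H| <= eps * bnorm H.

Definition bcontinuous (g : blocks -> blocks) : Prop :=
  forall X (eps : R), 0 < eps -> exists2 delta : R, 0 < delta &
    forall Y, bnorm (bsub Y X) < delta -> bnorm (bsub (g Y) (g X)) < eps.

End Blocks.

Definition is_norm (R : realType) (p q : nat) (N : 'M[R]_(p, q) -> R) : Prop :=
  [/\ forall A, 0 <= N A,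
      forall A, N A = 0 -> A = 0,
      forall (a : R) A, N (a *: A) = `|a| * N A &
      forall A B, N (A + B) <= N A + N B].

Definition dual_norm (R : realType) (p q : nat) (N : 'M[R]_(p, q) -> R)
  (G : 'M[R]_(p, q)) : R :=
  sup [set mip G Y | Y in [set Y | N Y <= 1]].

Definition is_distribution (b : nat) (R : realType) (P : {set 'I_b} -> R) : Prop :=
  (forall S, 0 <= P S) /\ \sum_(S : {set 'I_b}) P S = 1.

Definition supp (b : nat) (R : realType) (P : {set 'I_b} -> R) : {set {set 'I_b}} :=
  [set S | 0 < P S].

(* phi t := f (X + t Gam) is differentiable with phi' t = <grad f (X + t Gam), Gam>.
   Pairing block by block, the dual-norm inequality and the smoothness
   hypothesis for the increment t Gam give |phi' t - phi' 0| <= C t, where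
   C = sum_(i in S) (L0 + L1 ||grad_i f X||_* ) ||Gam_i||^2.  The mean value
   theorem applied to +-(phi t - t phi' 0) - C t^2 / 2 integrates this to
   |phi 1 - phi 0 - phi' 0| <= C / 2.  The dual norm is a genuine supremum
   because the unit ball of any norm on a finite-dimensional space is bounded,
   by compactness of the unit sphere of the max norm. *)
From HB Require Import structures.
From mathcomp Require Import all_boot all_order all_algebra.
From mathcomp Require Import all_classical all_reals all_analysis.
From mathcomp Require Import ring lra.
Import Order.TTheory GRing.Theory Num.Theory.
Import numFieldNormedType.Exports.
Set Implicit Arguments. Unset Strict Implicit. Unset Printing Implicit Defensive.
Local Open Scope ring_scope.
Local Open Scope classical_set_scope.

Lemma ler_norm_mx_entry (R : realType) (p q : nat) (A : 'M[R]_(p, q)) i j :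
  `|A i j| <= `|A|.
Proof.
have /mapP[k _ ->] : `|A i j| \in [seq `|A x.1 x.2| | x : 'I_p * 'I_q].
  by apply/mapP; exists (i, j) => //=; rewrite mem_enum.
by rewrite [leRHS]/Num.Def.normr /= mx_normrE; apply/bigmax_geP; right; exists k.
Qed.

Section TraceInnerProduct.
Variables (R : realType) (p q : nat).
Implicit Types A B G Y : 'M[R]_(p, q).

Lemma mipE G Y : mip G Y = \sum_i \sum_j G i j * Y i j.
Proof.
rewrite /mip /mxtrace exchange_big; apply: eq_bigr => j _.
by rewrite mxE; apply: eq_bigr => i _; rewrite mxE.
Qed.

Lemma mipZr G a Y : mip G (a *: Y) = a * mip G Y.
Proof. by rewrite /mip -scalemxAr mxtraceZ. Qed.

Lemma mip0r G : mip G 0 = 0.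
Proof. by rewrite /mip mulmx0 mxtrace0. Qed.

Lemma mipBl A B Y : mip (A - B) Y = mip A Y - mip B Y.
Proof. by rewrite /mip linearB /= mulmxBl linearB. Qed.

End TraceInnerProduct.

Section MatrixNorm.
Variables (R : realType) (p q : nat) (N : 'M[R]_(p, q) -> R).
Hypothesis normN : is_norm N.

Lemma nrm_ge0 A : 0 <= N A. Proof. by case: normN => + _ _ _; apply. Qed.
Lemma nrm_eq0 A : N A = 0 -> A = 0. Proof. by case: normN => _ + _ _; apply. Qed.
Lemma nrmZ a A : N (a *: A) = `|a| * N A. Proof. by case: normN => _ _ + _; apply. Qed.
Lemma ler_nrmD A B : N (A + B) <= N A + N B. Proof. by case: normN => _ _ _; apply. Qed.

Lemma nrm0 : N 0 = 0.
Proof. by rewrite -(scale0r (0 : 'M[R]_(p, q))) nrmZ normr0 mul0r. Qed.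

Lemma nrmN A : N (- A) = N A.
Proof. by rewrite -scaleN1r nrmZ normrN normr1 mul1r. Qed.

Lemma nrm_gt0 A : A != 0 -> 0 < N A.
Proof.
by move=> A0; rewrite lt_def nrm_ge0 andbT; apply: contra A0 => /eqP/nrm_eq0->.
Qed.

Lemma ler_nrm_sum (I : Type) (r : seq I) (F : I -> 'M[R]_(p, q)) :
  N (\sum_(i <- r) F i) <= \sum_(i <- r) N (F i).
Proof.
elim: r => [|x r IHr]; first by rewrite !big_nil nrm0.
by rewrite !big_cons (le_trans (ler_nrmD _ _)) // lerD2l.
Qed.

Lemma ler_dist_nrm A B : `|N A - N B| <= N (A - B).
Proof.
have := ler_nrmD (B - A) A; have := ler_nrmD (A - B) B.
by rewrite !subrK -(nrmN (B - A)) opprB ler_norml => h1 h2; apply/andP; split; lra.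
Qed.

Lemma nrm_vec_mx_le : exists2 K, 0 <= K & forall u : 'rV[R]_(p * q),
  N (vec_mx u) <= K * `|u|.
Proof.
pose e j := vec_mx (delta_mx 0 j : 'rV[R]_(p * q)).
exists (\sum_j N (e j)) => [|u]; first by apply: sumr_ge0 => j _; apply: nrm_ge0.
have -> : vec_mx u = \sum_j u ord0 j *: e j.
  rewrite {1}(matrix_sum_delta u) big_ord1 linear_sum.
  by apply: eq_bigr => j _; rewrite linearZ.
rewrite mulr_suml (le_trans (ler_nrm_sum _ _)) //; apply: ler_sum => j _.
by rewrite nrmZ mulrC ler_wpM2l ?nrm_ge0 // (ler_norm_mx_entry u ord0 j).
Qed.

Lemma continuous_nrm_vec_mx : continuous (fun u : 'rV[R]_(p * q) => N (vec_mx u)).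
Proof.
have [K K0 NK] := nrm_vec_mx_le.
have K1 : 0 < K + 1 by rewrite ltr_wpDl.
move=> u; apply/(@cvgrPdist_lt _ _ _ _ (nbhs_filter u)) => e e0.
apply/(@nbhs_normP _ 'rV[R]_(p * q) u); exists (e / (K + 1)) => [|v /= uv].
  by rewrite /= divr_gt0.
rewrite (le_lt_trans (ler_dist_nrm _ _)) // -linearB (le_lt_trans (NK _)) //.
rewrite (@le_lt_trans _ _ ((K + 1) * `|u - v|)) ?ler_wpM2r ?lerDl //.
by rewrite mulrC -ltr_pdivlMr.
Qed.

Lemma nrm_vec_mx_ge : exists2 c, 0 < c & forall u : 'rV[R]_(p * q),
  c * `|u| <= N (vec_mx u).
Proof.
pose S := [set u : 'rV[R]_(p * q) | `|u| = 1].
have homog c : 0 < c -> (forall u, S u -> c <= N (vec_mx u)) ->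
    forall u, c * `|u| <= N (vec_mx u).
  move=> c0 cS u; have [->|u0] := eqVneq u 0; first by rewrite normr0 mulr0 nrm_ge0.
  have u_gt0 : 0 < `|u| by rewrite normr_gt0.
  have := cS (`|u|^-1 *: u); rewrite linearZ /= nrmZ normfV normr_id.
  rewrite -ler_pdivlMr // mulrC; apply.
  by rewrite /S /= normrZ normfV normr_id mulVf ?gt_eqF.
have [[u0 Su0]|S0] := pselect (S !=set0); last first.
  by exists 1 => //; apply: homog => // u Su; case: S0; exists u.
have cS : compact S.
  apply: bounded_closed_compact.
    exists 1; split; first by rewrite num_real.
    by move=> M M1 u /= ->; apply: ltW.
  have -> : S = Num.norm @^-1` [set 1] by [].
  by apply: preimage_closed; [move=> u _; apply: norm_continuous | apply: closed_eq].
have [c Sc cmin] := EVT_min_rV (ex_intro _ u0 Su0) cS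
  (continuous_subspaceT continuous_nrm_vec_mx).
have c_gt0 : 0 < N (vec_mx c).
  apply: nrm_gt0; apply: contraPneq Sc => /(congr1 mxvec).
  rewrite vec_mxK linear0 => ->.
  by rewrite inE /S /= normr0 => /esym/eqP; rewrite oner_eq0.
by exists (N (vec_mx c)) => //; apply: homog => // u Su; apply: cmin; rewrite inE.
Qed.

Lemma dual_norm_has_sup G : has_sup [set mip G Y | Y in [set Y | N Y <= 1]].
Proof.
split; first by exists (mip G 0), 0 => //=; rewrite nrm0.
have [c c0 cN] := nrm_vec_mx_ge.
exists (\sum_i \sum_j `|G i j| / c) => _ [Y /= NY1 <-].
rewrite mipE; apply: ler_sum => i _; apply: ler_sum => j _.
rewrite (le_trans (ler_norm _)) // normrM ler_wpM2l // -[c^-1]mul1r ler_pdivlMr //.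
rewrite mulrC (le_trans _ NY1) // -[Y in N Y]mxvecK (le_trans _ (cN _)) //.
rewrite ler_wpM2l ?(ltW c0) //.
by rewrite -[Y i j]mxvecE; apply: ler_norm_mx_entry.
Qed.

Lemma ler_mip_dual_norm G Y : N Y <= 1 -> mip G Y <= dual_norm N G.
Proof. by move=> NY1; apply: sup_upper_bound (dual_norm_has_sup G) _ _; exists Y. Qed.

Lemma ler_norm_mip G Y : `|mip G Y| <= dual_norm N G * N Y.
Proof.
have [->|Y0] := eqVneq Y 0; first by rewrite mip0r normr0 nrm0 mulr0.
have NY_gt0 := nrm_gt0 Y0.
suff unit_scale s : `|s| = 1 -> mip G (s *: Y) <= dual_norm N G * N Y.
  have := unit_scale (-1); have := unit_scale 1; rewrite normrN normr1 !mipZr.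
  by rewrite ler_norml => /(_ erefl) h1 /(_ erefl) h2; apply/andP; split; lra.
move=> s1; rewrite -[s *: Y](scalerKV (lt0r_neq0 NY_gt0)) mipZr mulrC.
rewrite ler_wpM2r ?nrm_ge0 // ler_mip_dual_norm // !nrmZ s1 mul1r normfV.
by rewrite ger0_norm ?nrm_ge0 // mulVf ?gt_eqF.
Qed.

End MatrixNorm.

Lemma taylor1_remainder_le (R : realType) (phi dphi : R -> R) (C : R) :
  (forall t : R, is_derive t (1 : R) phi (dphi t)) ->
  (forall t, 0 < t < 1 -> `|dphi t - dphi 0| <= C * t) ->
  `|phi 1 - phi 0 - dphi 0| <= C / 2.
Proof.
move=> phiD phiL.
suff side s : `|s| = 1 -> s * (phi 1 - phi 0 - dphi 0) <= C / 2.
  have := side (-1); have := side 1; rewrite normrN normr1 ler_norml.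
  by move=> /(_ erefl) h1 /(_ erefl) h2; apply/andP; split; lra.
move=> s1; pose h := s \*: (phi - dphi 0 \*: id) - C / 2 \*: id ^+ 2.
have hD t : is_derive t (1 : R) h (s * (dphi t - dphi 0) - C * t).
  by apply: is_derive_eq; rewrite /= expr1 ![_%:A]mulr1 /GRing.scale /= mulr_natl; lra.
have hE x : h x = s * (phi x - dphi 0 * x) - C / 2 * x ^+ 2 by [].
have hc : {within `[0, 1], continuous h}.
  by apply: derivable_within_continuous => t _; exact: ex_derive.
have [t] := MVT ltr01 (fun t _ => hD t) hc.
rewrite in_itv /= => /andP[t0 t1].
have : s * (dphi t - dphi 0) <= C * t.
  apply: le_trans (phiL t _); last by rewrite t0 t1.
  by apply: le_trans (ler_norm _) _; rewrite normrM s1 mul1r.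
rewrite !hE expr1n expr0n !mulr0 !mulr1 subr0.
lra.
Qed.

Section Blocks.
Variables (R : realType) (b : nat) (m n : 'I_b -> nat).
Implicit Types (G H X : blocks R m n).

Definition bscale (h : R) G : blocks R m n := fun i => h *: G i.

Definition line X G (t : R) : blocks R m n := badd X (bscale t G).

Lemma bipZr G h H : bip G (bscale h H) = h * bip G H.
Proof. by rewrite /bip mulr_sumr; apply: eq_bigr => i _; rewrite mipZr. Qed.

Lemma bnormZ h H : bnorm (bscale h H) = `|h| * bnorm H.
Proof.
rewrite /bnorm mulr_sumr; apply: eq_bigr => i _; rewrite mulr_sumr.
by apply: eq_bigr => k _; rewrite mulr_sumr; apply: eq_bigr => l _; rewrite mxE normrM.
Qed.

Lemma bnorm_ge0 H : 0 <= bnorm H.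
Proof. by do 3!(apply: sumr_ge0 => ? _). Qed.

Lemma line0 X G : line X G 0 = X.
Proof.
by apply: functional_extensionality_dep => i; rewrite /line /badd /bscale scale0r addr0.
Qed.

Lemma line1 X G : line X G 1 = badd X G.
Proof.
by apply: functional_extensionality_dep => i; rewrite /line /badd /bscale scale1r.
Qed.

Lemma badd_line X G t h : badd (line X G t) (bscale h G) = line X G (h + t).
Proof.
apply: functional_extensionality_dep => i.
by rewrite /line /badd /bscale scalerDl [h *: _ + _]addrC addrA.
Qed.

Lemma ler_bip_sub (nrm : forall i, 'M[R]_(m i, n i) -> R) (S : {set 'I_b}) G H Gam :
  (forall i, is_norm (nrm i)) -> (forall i, i \notin S -> Gam i = 0) ->
  `|bip G Gam - bip H Gam|
    <= \sum_(i in S) dual_norm (nrm i) (G i - H i) * nrm i (Gam i).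
Proof.
move=> normN GamS; rewrite /bip -sumrB (le_trans (ler_norm_sum _ _ _)) //.
rewrite [leRHS]big_mkcond /=; apply: ler_sum => i _; rewrite -mipBl.
by case: ifPn => [_|/GamS ->]; [apply: ler_norm_mip | rewrite mip0r normr0].
Qed.

Lemma is_derive_line (f : blocks R m n -> R) (g : blocks R m n -> blocks R m n) X G t :
  is_gradient f g ->
  is_derive t (1 : R) (fun s => f (line X G s)) (bip (g (line X G t)) G).
Proof.
move=> fg; set phi := fun s => f (line X G s); set D := bip (g (line X G t)) G.
suff phiD : (fun h => h^-1 *: ((phi \o shift t) (h *: 1) - phi t)) @ 0^' --> D.
  by apply: DeriveDef; [apply/cvgP: phiD | apply: cvg_lim phiD].
apply/cvgrPdist_le => e e0.
have G1 : 0 < bnorm G + 1 by rewrite ltr_wpDl // bnorm_ge0.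
have [d d0 fgd] := fg (line X G t) _ (divr_gt0 e0 G1).
near=> h.
have h0 : h != 0 by near: h; exact: nbhs_dnbhs_neq.
have hd : `|h| < d / (bnorm G + 1) by near: h; apply: dnbhs0_lt; rewrite divr_gt0.
have h_gt0 : 0 < `|h| by rewrite normr_gt0.
have hGd : bnorm (bscale h G) < d.
  rewrite bnormZ (@le_lt_trans _ _ (`|h| * (bnorm G + 1))) ?ler_wpM2l ?lerDl //.
  by rewrite -ltr_pdivlMr.
have := fgd _ hGd; rewrite badd_line bipZr bnormZ -/D /= [h%:A]mulr1 => fgh.
have -> : D - h^-1 *: (phi (h + t) - phi t) = - (h^-1 * (phi (h + t) - phi t - h * D)).
  by rewrite /GRing.scale /=; field.
rewrite normrN normrM normfV ler_pdivrMl // (le_trans fgh) // mulrCA ler_wpM2l ?ltW //.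
by rewrite mulrAC ltr_pdivrMr // ltr_pM2l // ltrDl.
Unshelve. all: by end_near.
Qed.

End Blocks.

Theorem lemma10 (R : realType) (b : nat) (m n : 'I_b -> nat)
  (nrm : forall i : 'I_b, 'M[R]_(m i, n i) -> R)
  (f : blocks R m n -> R) (g : blocks R m n -> blocks R m n)
  (P : {set 'I_b} -> R) (L0 L1 : 'I_b -> {set 'I_b} -> R) :
  (forall i, is_norm (nrm i)) ->
  is_gradient f g -> bcontinuous g ->
  is_distribution P ->
  (forall i S, 0 <= L0 i S) -> (forall i S, 0 <= L1 i S) ->
  (forall S, S \in supp P -> forall i, i \in S ->
     forall (X Gam : blocks R m n), (forall j, j \notin S -> Gam j = 0) ->
       dual_norm (nrm i) (g (badd X Gam) i - g X i)
         <= (L0 i S + L1 i S * dual_norm (nrm i) (g X i)) * nrm i (Gam i)) ->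
  forall S, S \in supp P ->
  forall (X Gam : blocks R m n), (forall i, i \notin S -> Gam i = 0) ->
    `|f (badd X Gam) - f X - bip (g X) Gam|
      <= \sum_(i in S)
           (L0 i S + L1 i S * dual_norm (nrm i) (g X i)) / 2 * nrm i (Gam i) ^+ 2.
Proof.
move=> normN fg _ _ _ _ smooth S suppS X Gam GamS.
set c := fun i => L0 i S + L1 i S * dual_norm (nrm i) (g X i).
have tGamS t i : i \notin S -> bscale t Gam i = 0.
  by move=> /GamS; rewrite /bscale => ->; rewrite scaler0.
have grad_lin t : 0 < t < 1 ->
    `|bip (g (line X Gam t)) Gam - bip (g (line X Gam 0)) Gam|
      <= (\sum_(i in S) c i * nrm i (Gam i) ^+ 2) * t.
  move=> /andP[t0 _]; rewrite line0 (le_trans (ler_bip_sub _ _ normN GamS)) //.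
  rewrite mulr_suml; apply: ler_sum => i iS.
  rewrite [leRHS](_ : _ = c i * (t * nrm i (Gam i)) * nrm i (Gam i)); last by ring.
  rewrite ler_wpM2r ?(nrm_ge0 (normN i)) //.
  apply: le_trans (smooth S suppS i iS X _ (tGamS t)) _.
  by rewrite /bscale (nrmZ (normN i)) (ger0_norm (ltW t0)).
have := taylor1_remainder_le (is_derive_line X Gam ^~ fg) grad_lin.
rewrite line1 line0 mulr_suml.
rewrite [X in _ -> _ <= X](eq_bigr (fun i => c i * nrm i (Gam i) ^+ 2 / 2)) //.
by move=> i _; rewrite mulrAC.
Qed.
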